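(* Let $(\mathcal A,\mathcal T,(-))$ be a meta-tangible $\mathcal T$-triple and $a,b\in\mathcal T$. Then at least one of the following holds: (i) $a=(-)b$; (ii) $a+b=a$ (and then also $a^\circ+b=a^\circ$); (iii) $a^\circ+b=b$.
   Context: $(\mathcal A,+,\mathbb 0)$ commutative monoid, $\mathcal T\subseteq\mathcal A\setminus\{\mathbb 0\}$. A negation map is $(-):\mathcal A\to\mathcal A$ with $(-)(b_1+b_2)=(-)b_1+(-)b_2$, $(-)((-)b)=b$, $(-)\mathbb 0=\mathbb 0$, $(-)\mathcal T\subseteq\mathcal T$. Write $b(-)c:=b+((-)c)$, $b^\circ:=b(-)b$, $\mathcal A^\circ=\{b^\circ:b\in\mathcal A\}$. A $\mathcal T$-triple $(\mathcal A,\mathcal T,(-))$: such data with an action $\mathcal T\times\mathcal A\to\mathcal A$ satisfying $a(b_1+b_2)=ab_1+ab_2$, $a\mathbb 0=\mathbb 0$, $(-)(ab)=((-)a)b=a((-)b)$, with $\mathcal T\cap\mathcal A^\circ=\emptyset$ and every element of $\mathcal A$ a finite sum of elements of $\mathcal T$. The triple is meta-tangible if $a+b\in\mathcal T$ for all $a,b\in\mathcal T$ with $b\neq(-)a$. *)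

From Stdlib Require Import List.
Import ListNotations.

Record TTriple := {
  car : Type;
  add : car -> car -> car;
  zero : car;
  tng : car -> Prop;                 (* membership in T *)
  neg : car -> car;
  act : car -> car -> car;           (* action; only its restriction to T x A matters *)
  add_assoc : forall x y z, add x (add y z) = add (add x y) z;
  add_comm : forall x y, add x y = add y x;
  add_zero : forall x, add x zero = x;
  tng_nz : forall x, tng x -> x <> zero;
  neg_add : forall x y, neg (add x y) = add (neg x) (neg y);
  neg_neg : forall x, neg (neg x) = x;
  neg_zero : neg zero = zero;
  neg_tng : forall x, tng x -> tng (neg x);
  act_add : forall a x y, tng a -> act a (add x y) = add (act a x) (act a y);
  act_zero : forall a, tng a -> act a zero = zero;
  act_neg_l : forall a x, tng a -> neg (act a x) = act (neg a) x;
  act_neg_r : forall a x, tng a -> neg (act a x) = act a (neg x);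
  tng_not_quasi0 : forall b, ~ tng (add b (neg b));
  tng_gen : forall x, exists l : list car,
      Forall tng l /\ x = fold_right add zero l
}.

Arguments add {t}. Arguments zero {t}. Arguments tng {t}. Arguments neg {t}.

Definition circ {S : TTriple} (b : car S) : car S := add b (neg b).

Definition meta_tangible (S : TTriple) : Prop :=
  forall a b : car S, tng a -> tng b -> b <> neg a -> tng (add a b).

(* If a <> (-)b then a + b is tangible. Since a° + b = (a + b) (-) a, either
   a + b = a, or meta-tangibility makes a° + b tangible too. In the latter case,
   unless a° + b = b, the element (a° + b) (-) b = a° + b° = (a + b)° would be
   tangible, which is impossible as T meets no quasi-zero. *)
From Stdlib Require Import Classical.

Section NegationMap.

Variable S : TTriple.

Lemma neg_inj (x y : car S) : neg x = neg y -> x = y.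
Proof.
  intro E. rewrite <- (neg_neg S x), <- (neg_neg S y), E. reflexivity.
Qed.

Lemma neg_sym (x y : car S) : x = neg y -> y = neg x.
Proof.
  intro E. rewrite E, neg_neg. reflexivity.
Qed.

Lemma circ_add (x y : car S) : circ (add x y) = add (circ x) (circ y).
Proof.
  unfold circ. rewrite neg_add, <- !add_assoc. f_equal.
  rewrite (add_comm S y), <- !add_assoc. f_equal. apply add_comm.
Qed.

Lemma add_circ_l (x y : car S) : add (circ x) y = add (add x y) (neg x).
Proof.
  unfold circ. rewrite <- !add_assoc. f_equal. apply add_comm.
Qed.

Lemma add_circ_neg_r (x y : car S) :
  add (add (circ x) y) (neg y) = circ (add x y).
Proof.
  rewrite circ_add, <- add_assoc. reflexivity.
Qed.

Lemma meta_tangible_sub (x y : car S) :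
  meta_tangible S -> tng x -> tng y -> x <> y -> tng (add x (neg y)).
Proof.
  intros HS Hx Hy Hxy. apply HS; [exact Hx | now apply neg_tng |].
  intro E. apply Hxy, neg_inj. symmetry. exact E.
Qed.

End NegationMap.

Theorem lemma7p5 (S : TTriple) (HS : meta_tangible S) (a b : car S)
  (Ha : tng a) (Hb : tng b) :
  a = neg b
  \/ (add a b = a /\ add (circ a) b = circ a)
  \/ add (circ a) b = b.
Proof.
  destruct (classic (a = neg b)) as [Eab | Eab]; [now left | right].
  assert (Hab : tng (add a b)).
  { apply HS; [exact Ha | exact Hb |]. intro E. apply Eab, neg_sym, E. }
  destruct (classic (add a b = a)) as [Ea | Ea].
  - left. split; [exact Ea |]. rewrite add_circ_l, Ea. reflexivity.
  - right.
    assert (Hcb : tng (add (circ a) b)).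
    { rewrite add_circ_l. now apply meta_tangible_sub. }
    destruct (classic (add (circ a) b = b)) as [Eb | Eb]; [exact Eb | exfalso].
    apply (tng_not_quasi0 S (add a b)). fold (circ (add a b)).
    rewrite <- add_circ_neg_r. now apply meta_tangible_sub.
Qed.
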